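(* Let $a_i,b_i,a'_i,b'_i\ge 0$ ($i=1,2$), $v_1=(a'_1-a_1,b'_1-b_1)$, $v_2=(a'_2-a_2,b'_2-b_2)$, with $-1<\frac{b'_1-b_1}{a'_1-a_1}<0$ and $\frac{b'_2-b_2}{a'_2-a_2}<-1$, and fix $\epsilon\in(0,1)$. Let $A$ be the intersection point of $x^{a'_1-a_1}y^{b'_1-b_1}=\epsilon^2$ and $x^{a'_2-a_2}y^{b'_2-b_2}=\epsilon^{-2}$, and $D$ the intersection point of $x^{a'_1-a_1}y^{b'_1-b_1}=\epsilon^2$ and $x^{a'_2-a_2}y^{b'_2-b_2}=\epsilon^{2}$. Let $\mathbf{x}(t)$ be the solution with $\mathbf{x}(0)=D$ of $$\begin{pmatrix}\dot x\\ \dot y\end{pmatrix}=\big(\epsilon x^{a_1}y^{b_1}-\tfrac1\epsilon x^{a'_1}y^{b'_1}\big)v_1+\big(\tfrac1\epsilon x^{a_2}y^{b_2}-\epsilon x^{a'_2}y^{b'_2}\big)v_2,$$ which converges to $A$, and let $J$ be the Jacobian matrix of this vector field at $A$. Then $\mathbf{x}(t)$ approaches $A$ along the slower eigendirection of $J$, i.e. the eigendirection corresponding to the eigenvalue of smaller magnitude.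
   Context: This is the mass-action system of the network $a_1X+b_1Y\rightleftharpoons a'_1X+b'_1Y$, $a_2X+b_2Y\rightleftharpoons a'_2X+b'_2Y$ with constant rate constants $k_1=\epsilon,k_2=1/\epsilon,k_3=1/\epsilon,k_4=\epsilon$, for which $A$ is the detailed balanced positive equilibrium. *)

From Stdlib Require Import Reals.
From Coquelicot Require Import Coquelicot.
Open Scope R_scope.

Definition mono (x y p q : R) : R := Rpower x p * Rpower y q.

Definition rate1 (eps a1 b1 a1' b1' x y : R) : R :=
  eps * mono x y a1 b1 - / eps * mono x y a1' b1'.

Definition rate2 (eps a2 b2 a2' b2' x y : R) : R :=
  / eps * mono x y a2 b2 - eps * mono x y a2' b2'.

Definition fieldX (a1 b1 a1' b1' a2 b2 a2' b2' eps x y : R) : R :=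
  rate1 eps a1 b1 a1' b1' x y * (a1' - a1) + rate2 eps a2 b2 a2' b2' x y * (a2' - a2).

Definition fieldY (a1 b1 a1' b1' a2 b2 a2' b2' eps x y : R) : R :=
  rate1 eps a1 b1 a1' b1' x y * (b1' - b1) + rate2 eps a2 b2 a2' b2' x y * (b2' - b2).

From Stdlib Require Import Reals Lra Psatz Classical.
From Coquelicot Require Import Coquelicot.
Open Scope R_scope.

(* Write al_i = a'_i - a_i, be_i = b'_i - b_i and take as coordinates the logarithms
   p = al1 (ln x - ln xA) + be1 (ln y - ln yA), q = al2 (ln x - ln xA) + be2 (ln y - ln yA)
   of the two reaction quotients relative to the detailed-balanced point A.  Each net rate
   equals -k (e^p - 1) = -k exprel(p) p, so the vector field becomes a linear system
   (P, Q)' = M(t) (P, Q) with P = al1 al2 p, Q = q, whose coefficients are continuous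
   functions of the state and whose off-diagonal entries are negative.  The trajectory
   starts at D, where P = 0 and Q < 0, enters the cone P > 0 > Q at once and never leaves
   it.  There the slope Q/P solves a Riccati equation whose coefficients converge to those
   of M(A), so it converges to the negative root of the limiting quadratic: the slope of
   the eigenvector of M(A) for the eigenvalue of smaller modulus.  The displacement from A
   is a linear image of (P, Q) up to factors tending to 1, and this linear map conjugates
   M(A) to the Jacobian J, so the trajectory arrives along the slow eigendirection of J. *)

(** * Limits along filters *)

Section FilterlimArith.
Context {T : Type} {F : (T -> Prop) -> Prop} {FF : Filter F}.

Lemma filterlim_Rplus (f g : T -> R) a b :
  filterlim f F (locally a) -> filterlim g F (locally b) ->
  filterlim (fun t => f t + g t) F (locally (a + b)).
Proof. intros Hf Hg. exact (filterlim_comp_2 f g Rplus Hf Hg (filterlim_plus a b)). Qed.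

Lemma filterlim_Rmult (f g : T -> R) a b :
  filterlim f F (locally a) -> filterlim g F (locally b) ->
  filterlim (fun t => f t * g t) F (locally (a * b)).
Proof. intros Hf Hg. exact (filterlim_comp_2 f g Rmult Hf Hg (filterlim_mult a b)). Qed.

Lemma filterlim_Ropp (f : T -> R) a :
  filterlim f F (locally a) -> filterlim (fun t => - f t) F (locally (- a)).
Proof. intros Hf. exact (filterlim_comp _ _ _ f Ropp _ _ _ Hf (filterlim_opp a)). Qed.

Lemma filterlim_Rminus (f g : T -> R) a b :
  filterlim f F (locally a) -> filterlim g F (locally b) ->
  filterlim (fun t => f t - g t) F (locally (a - b)).
Proof. intros Hf Hg. apply filterlim_Rplus; [exact Hf | now apply filterlim_Ropp]. Qed.

Lemma filterlim_continuous_comp (f : T -> R) (g : R -> R) a :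
  filterlim f F (locally a) -> continuous g a ->
  filterlim (fun t => g (f t)) F (locally (g a)).
Proof. intros Hf Hg. exact (filterlim_comp _ _ _ f g _ _ _ Hf Hg). Qed.

Lemma filterlim_Rdiv (f g : T -> R) a b :
  filterlim f F (locally a) -> filterlim g F (locally b) -> b <> 0 ->
  filterlim (fun t => f t / g t) F (locally (a / b)).
Proof.
  intros Hf Hg Hb. apply (filterlim_Rmult f (fun t => / g t)); [exact Hf |].
  apply (filterlim_continuous_comp g Rinv); [exact Hg | now apply continuous_Rinv].
Qed.

Lemma filterlim_pow (f : T -> R) a n :
  filterlim f F (locally a) -> filterlim (fun t => f t ^ n) F (locally (a ^ n)).
Proof.
  intros Hf. apply (filterlim_continuous_comp f (fun z => z ^ n)); [exact Hf |].
  apply (ex_derive_continuous (fun z => z ^ n)). auto_derive. exact I.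
Qed.

Lemma filterlim_mono (u v : T -> R) U V p q :
  filterlim u F (locally U) -> filterlim v F (locally V) -> 0 < U -> 0 < V ->
  filterlim (fun t => mono (u t) (v t) p q) F (locally (mono U V p q)).
Proof.
  intros Hu Hv HU HV. unfold mono, Rpower.
  apply filterlim_Rmult; apply (filterlim_continuous_comp _ exp); try apply continuous_exp;
    apply filterlim_Rmult; try apply filterlim_const;
    apply (filterlim_continuous_comp _ ln); auto; now apply continuous_ln.
Qed.

Lemma filterlim_eventually_close (f : T -> R) (l e : R) :
  filterlim f F (locally l) -> 0 < e -> F (fun t => Rabs (f t - l) < e).
Proof. intros Hf He. exact (proj1 (filterlim_locally f l) Hf (mkposreal e He)). Qed.

End FilterlimArith.

Definition exprel (z : R) : R := if Req_EM_T z 0 then 1 else (exp z - 1) / z.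

Lemma exprel_0 : exprel 0 = 1.
Proof. unfold exprel. destruct (Req_EM_T 0 0); congruence. Qed.

Lemma exprel_spec z : exp z - 1 = exprel z * z.
Proof.
  unfold exprel. destruct (Req_EM_T z 0) as [-> | Hz].
  - rewrite exp_0. ring.
  - field. exact Hz.
Qed.

Lemma exprel_pos z : 0 < exprel z.
Proof.
  unfold exprel. destruct (Req_EM_T z 0) as [_ | Hz]; [lra |].
  destruct (Rlt_or_le 0 z) as [Hpos | Hneg].
  - pose proof (exp_ineq1_le z). apply Rdiv_lt_0_compat; lra.
  - assert (Hexp : exp z < exp 0) by (apply exp_increasing; lra). rewrite exp_0 in Hexp.
    replace ((exp z - 1) / z) with ((1 - exp z) / - z) by (field; exact Hz).
    apply Rdiv_lt_0_compat; lra.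
Qed.

Lemma continuous_exprel z : continuous exprel z.
Proof.
  destruct (Req_EM_T z 0) as [-> | Hz].
  - (* continuity at 0 is the derivative of exp at 0 *)
    apply continuity_pt_filterlim. intros e He.
    destruct (derivable_pt_lim_exp_0 e He) as [d Hd].
    exists d. split; [apply cond_pos |]. intros h [_ Hh].
    simpl in Hh |- *. unfold R_dist in Hh |- *. rewrite Rminus_0_r in Hh.
    rewrite exprel_0. unfold exprel. destruct (Req_EM_T h 0) as [-> | Hh0].
    + rewrite Rminus_diag, Rabs_R0. exact He.
    + specialize (Hd h Hh0 Hh). rewrite Rplus_0_l, exp_0 in Hd. exact Hd.
  - apply continuous_ext_loc with (g := fun h => (exp h - 1) / h).
    + assert (Hr : 0 < Rabs z) by (apply Rabs_pos_lt; exact Hz).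
      exists (mkposreal _ Hr). intros h Hh. unfold exprel.
      destruct (Req_EM_T h 0) as [-> | _]; [| reflexivity]. exfalso.
      cbn in Hh. unfold AbsRing_ball, abs, minus, plus, opp in Hh. simpl in Hh.
      rewrite Rplus_0_l, Rabs_Ropp in Hh. lra.
    + apply (ex_derive_continuous (fun h => (exp h - 1) / h)). auto_derive. exact Hz.
Qed.

Ltac filterlim_tac :=
  repeat match goal with
  | |- filterlim (fun t => @?f t + @?g t) _ _ => apply (filterlim_Rplus f g)
  | |- filterlim (fun t => @?f t - @?g t) _ _ => apply (filterlim_Rminus f g)
  | |- filterlim (fun t => @?f t * @?g t) _ _ => apply (filterlim_Rmult f g)
  | |- filterlim (fun t => @?f t / @?g t) _ _ => apply (filterlim_Rdiv f g)
  | |- filterlim (fun t => - @?f t) _ _ => apply (filterlim_Ropp f)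
  | |- filterlim (fun t => @?f t ^ _) _ _ => apply (filterlim_pow f)
  | |- filterlim (fun t => mono (@?u t) (@?v t) _ _) _ _ => apply (filterlim_mono u v)
  | |- filterlim (fun t => ln (@?f t)) _ _ => apply (filterlim_continuous_comp f ln)
  | |- filterlim (fun t => exprel (@?f t)) _ _ => apply (filterlim_continuous_comp f exprel)
  | |- filterlim (fun t => sqrt (@?f t)) _ _ => apply (filterlim_continuous_comp f sqrt)
  | |- filterlim (fun t => / @?f t) _ _ => apply (filterlim_continuous_comp f Rinv)
  | |- filterlim (fun _ => _) _ _ => apply filterlim_const
  | |- continuous ln _ => apply continuous_ln
  | |- continuous exprel _ => apply continuous_exprel
  | |- continuous sqrt _ => apply continuous_sqrt
  | |- continuous Rinv _ => apply continuous_Rinv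
  end.

(** * Differential inequalities *)

Lemma is_derive_continuity_pt (f : R -> R) s l : is_derive f s l -> continuity_pt f s.
Proof. intros H. apply continuity_pt_filterlim, (ex_derive_continuous f). now exists l. Qed.

Lemma is_derive_log_comb (x y : R -> R) t dx dy p q cx cy : 0 < x t -> 0 < y t ->
  is_derive x t dx -> is_derive y t dy ->
  is_derive (fun s => p * (ln (x s) - cx) + q * (ln (y s) - cy)) t (p * (dx / x t) + q * (dy / y t)).
Proof.
  intros Hx Hy Dx Dy. auto_derive.
  - repeat split; [now exists dx | lra | now exists dy | lra].
  - replace (Derive (fun s : R => x s) t) with dx by (symmetry; now apply is_derive_unique).
    replace (Derive (fun s : R => y s) t) with dy by (symmetry; now apply is_derive_unique).
    field. lra.
Qed.

Lemma continuity_pt_pos_near (f : R -> R) s : continuity_pt f s -> 0 < f s ->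
  exists d, 0 < d /\ forall q, Rabs (q - s) < d -> 0 < f q.
Proof.
  intros Hc Hpos. destruct (Hc (f s) Hpos) as [d [Hd Hnear]].
  exists d. split; [exact Hd |]. intros q Hq.
  destruct (Req_dec q s) as [-> | Hne]; [exact Hpos |].
  assert (Hfq : Rabs (f q - f s) < f s) by (apply (Hnear q); split; [split; [exact I | auto] | exact Hq]).
  apply Rabs_def2 in Hfq. lra.
Qed.

Lemma continuity_pt_left_nonneg (f : R -> R) t1 s : continuity_pt f s -> t1 < s ->
  (forall q, t1 <= q < s -> 0 < f q) -> 0 <= f s.
Proof.
  intros Hc Hs Hleft. destruct (Rle_or_lt 0 (f s)) as [| Hneg]; [assumption | exfalso].
  destruct (continuity_pt_pos_near (fun r => - f r) s) as [d [Hd Hnear]];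
    [now apply continuity_pt_opp | lra |].
  set (q := Rmax t1 (s - d / 2)).
  assert (Hq : t1 <= q < s /\ s - d / 2 <= q) by (unfold q; repeat split;
    [apply Rmax_l | apply Rmax_lub_lt; lra | apply Rmax_r]).
  specialize (Hleft q (proj1 Hq)).
  assert (0 < - f q) by (apply Hnear; rewrite Rabs_left; lra). lra.
Qed.

Lemma derive_pos_left_lt (f : R -> R) s l : is_derive f s l -> 0 < l ->
  exists d, 0 < d /\ forall h, 0 < h < d -> f (s - h) < f s.
Proof.
  intros Hd Hl. apply is_derive_Reals in Hd.
  destruct (Hd (l / 2)) as [d Hquot]; [lra |].
  exists d. split; [apply cond_pos |]. intros h Hh.
  assert (Hq : Rabs ((f (s + - h) - f s) / - h - l) < l / 2)
    by (apply Hquot; [lra | rewrite Rabs_Ropp, Rabs_pos_eq; lra]).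
  apply Rabs_def2 in Hq. replace (s + - h) with (s - h) in Hq by ring.
  assert (f (s - h) - f s = (f (s - h) - f s) / - h * - h) by (field; lra). nra.
Qed.

Lemma mvt_lower_bound (f df : R -> R) t1 t2 m : t1 <= t2 ->
  (forall s, t1 <= s <= t2 -> is_derive f s (df s)) ->
  (forall s, t1 <= s <= t2 -> m <= df s) -> m * (t2 - t1) <= f t2 - f t1.
Proof.
  intros Hle Hd Hm.
  destruct (MVT_gen f t1 t2 df) as [c [Hc ->]].
  - intros s Hs. rewrite Rmin_left, Rmax_right in Hs by lra. apply Hd. lra.
  - intros s Hs. rewrite Rmin_left, Rmax_right in Hs by lra.
    apply (is_derive_continuity_pt f s (df s)), Hd. lra.
  - rewrite Rmin_left, Rmax_right in Hc by lra.
    apply Rmult_le_compat_r; [lra | apply Hm; lra].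
Qed.

Lemma real_induction (S : R -> Prop) t1 t2 : t1 <= t2 ->
  (forall s, t1 <= s <= t2 -> (forall q, t1 <= q < s -> S q) -> S s) ->
  (forall s, t1 <= s < t2 -> S s -> exists d, 0 < d /\ forall q, s < q < s + d -> S q) ->
  S t2.
Proof.
  intros Hle Hclosed Hopen.
  set (E := fun r => t1 <= r <= t2 /\ forall q, t1 <= q <= r -> S q).
  assert (HE1 : E t1).
  { split; [lra |]. intros q Hq. replace q with t1 by lra.
    apply Hclosed; [lra | intros; lra]. }
  destruct (completeness E) as [s [Hub Hlub]];
    [exists t2; intros r Hr; apply Hr | exists t1; exact HE1 |].
  assert (Hs1 : t1 <= s) by (apply Hub, HE1).
  assert (Hs2 : s <= t2) by (apply Hlub; intros r Hr; apply Hr).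
  assert (Hbelow : forall q, t1 <= q < s -> S q).
  { intros q Hq. destruct (classic (exists r, E r /\ q < r)) as [[r [[_ Hr] Hqr]] | Hno].
    - apply Hr. lra.
    - exfalso. assert (s <= q); [| lra]. apply Hlub. intros r Er.
      destruct (Rle_or_lt r q); [assumption |]. exfalso. apply Hno. eauto. }
  assert (Hs : S s) by (apply Hclosed; auto).
  destruct (Rle_lt_or_eq_dec s t2 Hs2) as [Hlt | <-]; [exfalso | exact Hs].
  destruct (Hopen s (conj Hs1 Hlt) Hs) as [d [Hd Hright]].
  pose proof (Rmin_l t2 (s + d / 2)). pose proof (Rmin_r t2 (s + d / 2)).
  assert (Rmin t2 (s + d / 2) > s) by (apply Rmin_glb_lt; lra).
  set (s' := Rmin t2 (s + d / 2)) in *.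
  assert (Es' : E s').
  { split; [lra |]. intros q Hq. destruct (Rlt_or_le q s); [apply Hbelow; lra |].
    destruct (Req_dec q s) as [-> | Hne]; [exact Hs | apply Hright; lra]. }
  specialize (Hub s' Es'). lra.
Qed.

Lemma gronwall_pos (P dP : R -> R) K t1 t2 : t1 <= t2 ->
  (forall s, t1 <= s <= t2 -> is_derive P s (dP s)) ->
  (forall s, t1 <= s <= t2 -> - K * P s <= dP s) -> 0 < P t1 -> 0 < P t2.
Proof.
  intros Hle Hd Hlow HP1.
  (* the function P e^(K t) is nondecreasing *)
  assert (Hmono : 0 * (t2 - t1) <= P t2 * exp (K * t2) - P t1 * exp (K * t1)).
  { apply (mvt_lower_bound (fun s => P s * exp (K * s)) (fun s => (dP s + K * P s) * exp (K * s)));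
      [exact Hle | |].
    - intros s Hs.
      replace ((dP s + K * P s) * exp (K * s)) with (dP s * exp (K * s) + P s * (K * exp (K * s)))
        by ring.
      apply (is_derive_mult P (fun r => exp (K * r))); [now apply Hd | | exact Rmult_comm].
      auto_derive; [exact I | ring].
    - intros s Hs. apply Rmult_le_pos; [specialize (Hlow s Hs); lra | apply Rlt_le, exp_pos]. }
  pose proof (exp_pos (K * t1)). pose proof (exp_pos (K * t2)).
  assert (0 < P t1 * exp (K * t1)) by (apply Rmult_lt_0_compat; assumption). nra.
Qed.

Section ConeInvariance.
Variables (P Q a b c d : R -> R) (t1 : R).
Hypothesis HdP : forall s, t1 <= s -> is_derive P s (a s * P s + b s * Q s).
Hypothesis HdQ : forall s, t1 <= s -> is_derive Q s (c s * P s + d s * Q s).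
Hypothesis Ha : forall s, t1 <= s -> continuity_pt a s.
Hypothesis Hb : forall s, t1 <= s -> b s <= 0.
Hypothesis Hc : forall s, t1 <= s -> c s < 0.

Let cone (s : R) : Prop := 0 < P s /\ Q s < 0.

Let continuity_pt_P s (Hs : t1 <= s) : continuity_pt P s :=
  is_derive_continuity_pt _ _ _ (HdP s Hs).

Let continuity_pt_opp_Q s (Hs : t1 <= s) : continuity_pt (fun r => - Q r) s :=
  continuity_pt_opp _ _ (is_derive_continuity_pt _ _ _ (HdQ s Hs)).

Lemma cone_closed s : t1 < s -> cone t1 -> (forall q, t1 <= q < s -> cone q) -> cone s.
Proof.
  intros Hs [HP1 _] Hbefore.
  assert (HP0 : 0 <= P s)
    by (apply (continuity_pt_left_nonneg P t1); [apply continuity_pt_P | | intros q Hq; apply Hbefore]; lra).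
  assert (HQ0 : 0 <= - Q s)
    by (apply (continuity_pt_left_nonneg (fun r => - Q r) t1);
        [apply continuity_pt_opp_Q | | intros q Hq; specialize (Hbefore q Hq); unfold cone in Hbefore]; lra).
  destruct (continuity_ab_min a t1 s) as [m [Hm _]]; [lra | intros; apply Ha; lra |].
  assert (HPs : 0 < P s).
  { apply (gronwall_pos P (fun r => a r * P r + b r * Q r) (- a m) t1 s);
      [lra | intros; apply HdP; lra | | exact HP1].
    intros r Hr. specialize (Hm r Hr). specialize (Hb r (proj1 Hr)).
    assert (0 <= P r /\ Q r <= 0)
      by (destruct (Req_dec r s) as [-> | ]; [lra | specialize (Hbefore r); unfold cone in Hbefore; lra]).
    nra. }
  split; [exact HPs |]. destruct (Rlt_or_le (Q s) 0) as [| HQs]; [assumption | exfalso].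
  (* Q s = 0 and Q' s = c s * P s < 0, so Q was positive just before s *)
  destruct (derive_pos_left_lt (fun r => - Q r) s (- (c s * P s + d s * Q s))) as [h0 [Hh0 Hleft]].
  { apply (is_derive_opp Q). apply HdQ. lra. }
  { replace (Q s) with 0 by lra. specialize (Hc s ltac:(lra)). nra. }
  pose proof (Rmin_l (h0 / 2) (s - t1)). pose proof (Rmin_r (h0 / 2) (s - t1)).
  assert (0 < Rmin (h0 / 2) (s - t1)) by (apply Rmin_glb_lt; lra).
  set (h := Rmin (h0 / 2) (s - t1)) in *.
  specialize (Hleft h ltac:(lra)). specialize (Hbefore (s - h)). unfold cone in Hbefore. lra.
Qed.

Lemma cone_open s : t1 <= s -> cone s -> exists e, 0 < e /\ forall q, s < q < s + e -> cone q.
Proof.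
  intros Hs [HPs HQs].
  destruct (continuity_pt_pos_near P s (continuity_pt_P s Hs) HPs) as [e1 [He1 Hnear1]].
  destruct (continuity_pt_pos_near (fun r => - Q r) s (continuity_pt_opp_Q s Hs)) as [e2 [He2 Hnear2]];
    [lra |].
  exists (Rmin e1 e2). split; [now apply Rmin_glb_lt |]. intros q Hq.
  pose proof (Rmin_l e1 e2). pose proof (Rmin_r e1 e2).
  assert (Rabs (q - s) = q - s) by (apply Rabs_pos_eq; lra).
  split; [apply Hnear1 | enough (0 < - Q q) by lra; apply Hnear2]; lra.
Qed.

Lemma cone_invariant : 0 < P t1 -> Q t1 < 0 -> forall t, t1 <= t -> 0 < P t /\ Q t < 0.
Proof.
  intros HP1 HQ1 t Ht.
  apply (real_induction cone t1 t Ht).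
  - intros s Hs Hbefore. destruct (Req_dec s t1) as [-> | Hne]; [split; assumption |].
    apply cone_closed; [lra | split; assumption | exact Hbefore].
  - intros s Hs. apply cone_open. lra.
Qed.

End ConeInvariance.

Lemma stays_nonneg (g dg : R -> R) t0 t : t0 <= t ->
  (forall s, t0 <= s <= t -> is_derive g s (dg s)) ->
  (forall s, t0 <= s <= t -> g s < 0 -> 0 < dg s) -> 0 <= g t0 -> 0 <= g t.
Proof.
  intros Hle Hd Hpush H0.
  destruct (continuity_ab_min g t0 t Hle) as [m [Hmin Hm]];
    [intros s Hs; exact (is_derive_continuity_pt _ _ _ (Hd s Hs)) |].
  destruct (Rle_or_lt 0 (g m)) as [Hgm | Hgm]; [specialize (Hmin t); lra | exfalso].
  assert (Hm0 : t0 < m) by (destruct (Req_dec m t0) as [-> |]; lra).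
  destruct (derive_pos_left_lt g m (dg m) (Hd m Hm) (Hpush m Hm Hgm)) as [h0 [Hh0 Hleft]].
  pose proof (Rmin_l (h0 / 2) (m - t0)). pose proof (Rmin_r (h0 / 2) (m - t0)).
  assert (0 < Rmin (h0 / 2) (m - t0)) by (apply Rmin_glb_lt; lra).
  set (h := Rmin (h0 / 2) (m - t0)) in *.
  specialize (Hleft h ltac:(lra)). specialize (Hmin (m - h)). lra.
Qed.

Lemma eventually_nonneg (g dg : R -> R) T k : 0 < k ->
  (forall t, T <= t -> is_derive g t (dg t)) ->
  (forall t, T <= t -> g t <= 0 -> k <= dg t) ->
  exists T', T <= T' /\ forall t, T' <= t -> 0 <= g t.
Proof.
  intros Hk Hd Hpush.
  assert (Hreach : exists T', T <= T' /\ 0 <= g T').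
  { apply NNPP. intros Hno.
    assert (Hneg : forall t, T <= t -> g t < 0).
    { intros t Ht. destruct (Rlt_or_le (g t) 0); [assumption | exfalso; eauto]. }
    (* otherwise g grows at rate at least k forever *)
    set (t := T - g T / k + 1).
    assert (HT : 0 <= - g T / k) by (apply Rdiv_le_0_compat; [specialize (Hneg T); lra | lra]).
    assert (Hgrow : k * (t - T) <= g t - g T).
    { apply (mvt_lower_bound g dg); [unfold t; lra | intros; apply Hd; lra |].
      intros s Hs. apply Hpush; [lra | left; apply Hneg; lra]. }
    replace (k * (t - T)) with (- g T + k) in Hgrow by (unfold t; field; lra).
    specialize (Hneg t ltac:(unfold t; lra)). lra. }
  destruct Hreach as [T' [HT' H0]]. exists T'. split; [exact HT' |]. intros t Ht.
  apply (stays_nonneg g dg T' t Ht); [intros; apply Hd; lra | | exact H0].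
  intros s Hs Hg. specialize (Hpush s ltac:(lra) ltac:(lra)). lra.
Qed.

Lemma eventually_trapped (rho drho : R -> R) T lo hi kup kdown : 0 < kup -> 0 < kdown ->
  (forall t, T <= t -> is_derive rho t (drho t)) ->
  (forall t, T <= t -> rho t <= lo -> kup <= drho t) ->
  (forall t, T <= t -> hi <= rho t -> drho t <= - kdown) ->
  exists T', forall t, T' <= t -> lo <= rho t <= hi.
Proof.
  intros Hup Hdown Hd Hlo Hhi.
  destruct (eventually_nonneg (fun t => rho t - lo) drho T kup Hup) as [T2 [_ H2]].
  { intros t Ht. evar_last; [apply (is_derive_minus rho (fun _ => lo)); [now apply Hd | apply is_derive_const] |].
    unfold minus, plus, opp, zero. simpl. ring. }
  { intros t Ht Hr. apply Hlo; [exact Ht | lra]. }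
  destruct (eventually_nonneg (fun t => hi - rho t) (fun t => - drho t) T kdown Hdown) as [T3 [_ H3]].
  { intros t Ht. evar_last; [apply (is_derive_minus (fun _ => hi) rho); [apply is_derive_const | now apply Hd] |].
    unfold minus, plus, opp, zero. simpl. ring. }
  { intros t Ht Hr. specialize (Hhi t Ht ltac:(lra)). lra. }
  exists (Rmax T2 T3). intros t Ht.
  specialize (H2 t (Rle_trans _ _ _ (Rmax_l T2 T3) Ht)). specialize (H3 t (Rle_trans _ _ _ (Rmax_r T2 T3) Ht)).
  simpl in H2, H3. lra.
Qed.

(** * The Riccati equation *)

Definition riccati_root (A B C : R) : R := (- B - sqrt (B ^ 2 - 4 * A * C)) / (2 * A).

Section RiccatiRoot.
Variables A B C : R.
Hypotheses (HA : 0 < A) (HC : C < 0).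

Lemma riccati_discr_pos : 0 < B ^ 2 - 4 * A * C.
Proof. nra. Qed.

Lemma riccati_root_gap : - B - 2 * A * riccati_root A B C = sqrt (B ^ 2 - 4 * A * C).
Proof. unfold riccati_root. field. lra. Qed.

Lemma riccati_root_neg : riccati_root A B C < 0.
Proof.
  pose proof riccati_discr_pos as HD.
  assert (HB : Rabs B < sqrt (B ^ 2 - 4 * A * C)).
  { rewrite <- sqrt_Rsqr_abs. apply sqrt_lt_1; [apply Rle_0_sqr | lra | unfold Rsqr; nra]. }
  pose proof (Rle_abs (- B)) as HabsB. rewrite Rabs_Ropp in HabsB.
  apply Rdiv_neg_pos; lra.
Qed.

Lemma riccati_root_eq : C + B * riccati_root A B C + A * riccati_root A B C ^ 2 = 0.
Proof.
  pose proof (sqrt_sqrt _ (Rlt_le _ _ riccati_discr_pos)) as Hsq.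
  unfold riccati_root. set (s := sqrt (B ^ 2 - 4 * A * C)) in *.
  replace (C + B * ((- B - s) / (2 * A)) + A * ((- B - s) / (2 * A)) ^ 2)
    with ((s * s - (B ^ 2 - 4 * A * C)) / (4 * A)) by (field; lra).
  rewrite Hsq. field. lra.
Qed.

Lemma riccati_root_factor :
  exists rf, 0 < rf /\ B = - A * (riccati_root A B C + rf) /\ C = A * riccati_root A B C * rf.
Proof.
  pose proof riccati_root_neg as Hrs. pose proof riccati_root_eq as Hroot.
  set (rs := riccati_root A B C) in *.
  assert (HCf : C = A * rs * (- B / A - rs)).
  { replace C with (C + B * rs + A * rs ^ 2 - (B * rs + A * rs ^ 2)) by ring. rewrite Hroot. field. lra. }
  exists (- B / A - rs). split; [| split; [field; lra | exact HCf]].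
  assert (A * rs < 0) by nra. destruct (Rlt_or_le 0 (- B / A - rs)); [assumption | nra].
Qed.

End RiccatiRoot.

Lemma quadratic_perturbation_bound e0 e1 e2 r eta : r <= 0 ->
  Rabs e0 <= eta -> Rabs e1 <= eta -> Rabs e2 <= eta ->
  Rabs (e0 + e1 * r + e2 * r ^ 2) <= eta * (1 - r + r ^ 2).
Proof.
  intros Hr H0 H1 H2.
  apply Rabs_le_between in H0, H1, H2. apply Rabs_le_between. split; nra.
Qed.

Lemma riccati_rhs_lower A rs rf d r k0 k1 k2 eta :
  0 < A -> rs < 0 -> 0 < rf -> 0 < d -> r <= rs - d ->
  Rabs (k0 - A * rs * rf) <= eta -> Rabs (k1 + A * (rs + rf)) <= eta -> Rabs (k2 - A) <= eta ->
  eta <= A * d * Rmin 1 rf / (1 + d - rs) / 2 ->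
  A * d * Rmin 1 rf / (1 + d - rs) / 2 <= k0 + k1 * r + k2 * r ^ 2.
Proof.
  intros HA Hrs Hrf Hd Hr H0 H1 H2 Heta.
  pose proof (Rmin_l 1 rf). pose proof (Rmin_r 1 rf).
  assert (0 < Rmin 1 rf) by (apply Rmin_glb_lt; lra).
  set (m := Rmin 1 rf) in *.
  set (k := A * d * m / (1 + d - rs)) in *.
  assert (Hk0 : 0 < k) by (unfold k; apply Rdiv_lt_0_compat; [repeat apply Rmult_lt_0_compat |]; lra).
  assert (S1 : d * (1 - r) <= (rs - r) * (1 + d - rs)) by nra.
  assert (S2 : m * (1 - r) <= rf - r) by nra.
  assert (S3 : k * (1 - r) ^ 2 <= A * (r - rs) * (r - rf)).
  { apply (Rmult_le_reg_r (1 + d - rs)); [lra |].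
    replace (k * (1 - r) ^ 2 * (1 + d - rs)) with (A * ((d * (1 - r)) * (m * (1 - r))))
      by (unfold k; field; lra).
    replace (A * (r - rs) * (r - rf) * (1 + d - rs)) with (A * (((rs - r) * (1 + d - rs)) * (rf - r)))
      by ring.
    apply Rmult_le_compat_l; [lra | apply Rmult_le_compat; nra]. }
  pose proof (quadratic_perturbation_bound _ _ _ r eta ltac:(lra) H0 H1 H2) as Herr.
  apply Rabs_le_between in Herr.
  assert (k * (1 - r + r ^ 2) <= k * (1 - r) ^ 2) by (apply Rmult_le_compat_l; nra).
  assert (1 <= 1 - r + r ^ 2) by nra.
  nra.
Qed.

Lemma riccati_rhs_upper A rs rf d r k0 k1 k2 eta :
  0 < A -> rs < 0 -> 0 < rf -> 0 < d -> rs + d <= r -> r < 0 ->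
  Rabs (k0 - A * rs * rf) <= eta -> Rabs (k1 + A * (rs + rf)) <= eta -> Rabs (k2 - A) <= eta ->
  eta <= A * d * rf / 2 / (1 - rs + rs ^ 2) ->
  k0 + k1 * r + k2 * r ^ 2 <= - (A * d * rf / 2).
Proof.
  intros HA Hrs Hrf Hd Hr1 Hr2 H0 H1 H2 Heta.
  assert (W : 0 < 1 - rs + rs ^ 2) by nra.
  apply (Rmult_le_compat_r (1 - rs + rs ^ 2)) in Heta; [| lra].
  replace (A * d * rf / 2 / (1 - rs + rs ^ 2) * (1 - rs + rs ^ 2)) with (A * d * rf / 2) in Heta
    by (field; lra).
  assert (S : d * rf <= (r - rs) * (rf - r)) by nra.
  pose proof (quadratic_perturbation_bound _ _ _ r eta ltac:(lra) H0 H1 H2) as Herr.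
  apply Rabs_le_between in Herr.
  assert (0 <= eta) by (pose proof (Rabs_pos (k2 - A)); lra).
  assert (eta * (1 - r + r ^ 2) <= eta * (1 - rs + rs ^ 2)) by (apply Rmult_le_compat_l; nra).
  nra.
Qed.

Lemma is_lim_of_eventually_close (f : R -> R) (l : R) :
  (forall e, 0 < e -> Rbar_locally p_infty (fun t => Rabs (f t - l) < e)) -> is_lim f p_infty l.
Proof. intros Hf. apply (filterlim_locally f l). intros e. exact (Hf e (cond_pos e)). Qed.

Lemma riccati_limit (rho k0 k1 k2 : R -> R) (A B C T0 : R) :
  0 < A -> C < 0 ->
  (forall t, T0 <= t -> rho t < 0) ->
  (forall t, T0 <= t -> is_derive rho t (k0 t + k1 t * rho t + k2 t * rho t ^ 2)) ->
  is_lim k0 p_infty C -> is_lim k1 p_infty B -> is_lim k2 p_infty A ->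
  is_lim rho p_infty (riccati_root A B C).
Proof.
  intros HA HC Hneg Hd L0 L1 L2.
  pose proof (riccati_root_neg A B C HA HC) as Hrs.
  destruct (riccati_root_factor A B C HA HC) as [rf [Hrf [HB HCf]]].
  set (rs := riccati_root A B C) in *.
  apply is_lim_of_eventually_close. intros e He.
  (* once the coefficients are eta-close to their limits, rho is pushed up at speed kup
     below rs - d and down at speed kdown above rs + d *)
  pose proof (Rmin_l (e / 2) (- rs / 2)).
  assert (Hd0 : 0 < Rmin (e / 2) (- rs / 2)) by (apply Rmin_glb_lt; lra).
  set (d := Rmin (e / 2) (- rs / 2)) in *.
  set (kup := A * d * Rmin 1 rf / (1 + d - rs) / 2).
  set (kdown := A * d * rf / 2).
  assert (Hkup : 0 < kup) by (assert (0 < Rmin 1 rf) by (apply Rmin_glb_lt; lra);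
    unfold kup; apply Rdiv_lt_0_compat; [apply Rdiv_lt_0_compat; [repeat apply Rmult_lt_0_compat |] |]; lra).
  assert (Hkdown : 0 < kdown) by (unfold kdown; apply Rdiv_lt_0_compat; [repeat apply Rmult_lt_0_compat |]; lra).
  set (eta := Rmin kup (kdown / (1 - rs + rs ^ 2))).
  assert (Heta : 0 < eta) by (apply Rmin_glb_lt; [| apply Rdiv_lt_0_compat]; nra).
  destruct (filter_and _ _ (filterlim_eventually_close k0 C eta L0 Heta)
             (filter_and _ _ (filterlim_eventually_close k1 B eta L1 Heta)
                             (filterlim_eventually_close k2 A eta L2 Heta))) as [M HM].
  set (T1 := Rmax T0 M + 1).
  assert (HT1 : T0 < T1 /\ M < T1) by (pose proof (Rmax_l T0 M); pose proof (Rmax_r T0 M); unfold T1; lra).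
  assert (Hclose : forall t, T1 <= t ->
    Rabs (k0 t - A * rs * rf) <= eta /\ Rabs (k1 t + A * (rs + rf)) <= eta /\ Rabs (k2 t - A) <= eta).
  { intros t Ht. destruct (HM t ltac:(lra)) as [H0 [H1 H2]].
    rewrite <- HCf. replace (k1 t + A * (rs + rf)) with (k1 t - B) by (rewrite HB; ring). lra. }
  destruct (eventually_trapped rho (fun t => k0 t + k1 t * rho t + k2 t * rho t ^ 2) T1
              (rs - d) (rs + d) kup kdown Hkup Hkdown) as [T' HT'].
  - intros t Ht. apply Hd. lra.
  - intros t Ht Hr. destruct (Hclose t Ht) as (H0 & H1 & H2).
    apply (riccati_rhs_lower A rs rf d (rho t) _ _ _ eta); auto. apply Rmin_l.
  - intros t Ht Hr. destruct (Hclose t Ht) as (H0 & H1 & H2).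
    apply (riccati_rhs_upper A rs rf d (rho t) _ _ _ eta); auto; [apply Hneg; lra | apply Rmin_r].
  - exists T'. intros t Ht. specialize (HT' t ltac:(lra)). apply Rabs_def1; lra.
Qed.

Lemma at_right_0_ex (S : R -> Prop) : at_right 0 S -> exists d, 0 < d /\ forall t, 0 < t < d -> S t.
Proof.
  intros [d Hd]. exists d. split; [apply cond_pos |]. intros t Ht. apply Hd; [| lra].
  cbn. unfold AbsRing_ball, abs, minus, plus, opp. simpl.
  rewrite Ropp_0, Rplus_0_r, Rabs_pos_eq; lra.
Qed.

Lemma enters_cone_near_start (P Q dP : R -> R) k q0 :
  (forall t, 0 < t -> is_derive P t (dP t)) ->
  filterlim P (at_right 0) (locally 0) -> filterlim Q (at_right 0) (locally q0) ->
  filterlim dP (at_right 0) (locally k) -> q0 < 0 -> 0 < k ->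
  exists t1, 0 < t1 /\ 0 < P t1 /\ Q t1 < 0.
Proof.
  intros Hd LP LQ LdP Hq0 Hk.
  assert (Hnear : at_right 0 (fun t => k / 2 < dP t /\ Q t < 0)).
  { apply filter_and.
    - eapply filter_imp; [| exact (filterlim_eventually_close dP k (k / 2) LdP ltac:(lra))].
      intros t Ht. apply Rabs_def2 in Ht. lra.
    - eapply filter_imp; [| exact (filterlim_eventually_close Q q0 (- q0) LQ ltac:(lra))].
      intros t Ht. apply Rabs_def2 in Ht. lra. }
  destruct (at_right_0_ex _ Hnear) as [d1 [Hd1 H1]].
  set (t1 := d1 / 2).
  destruct (at_right_0_ex _ (filterlim_eventually_close P 0 (k * t1 / 4) LP ltac:(unfold t1; nra)))
    as [d2 [Hd2 H2]].
  pose proof (Rmin_l d2 t1). pose proof (Rmin_r d2 t1).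
  assert (0 < Rmin d2 t1) by (apply Rmin_glb_lt; unfold t1; lra).
  set (s := Rmin d2 t1 / 2) in *.
  assert (Hgrow : k / 2 * (t1 - s) <= P t1 - P s).
  { apply (mvt_lower_bound P dP); [unfold s; lra | intros; apply Hd; unfold s in *; lra |].
    intros r Hr. apply Rlt_le, H1. unfold s, t1 in *. lra. }
  specialize (H2 s ltac:(unfold s; lra)). rewrite Rminus_0_r in H2. apply Rabs_def2 in H2.
  assert (Hs : 0 < s <= t1 / 2) by (unfold s; lra).
  assert (k / 2 * (t1 / 2) <= k / 2 * (t1 - s)) by (apply Rmult_le_compat_l; lra).
  exists t1. repeat split; [unfold t1; lra | lra | apply H1; unfold t1; lra].
Qed.

Lemma normalized_limit (f g P X Y : R -> R) T (w1 w2 : R) : w1 <> 0 \/ w2 <> 0 ->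
  (forall t, T <= t -> 0 < P t /\ f t = P t * X t /\ g t = P t * Y t) ->
  is_lim X p_infty w1 -> is_lim Y p_infty w2 ->
  is_lim (fun t => f t / sqrt (f t ^ 2 + g t ^ 2)) p_infty (w1 / sqrt (w1 ^ 2 + w2 ^ 2)) /\
  is_lim (fun t => g t / sqrt (f t ^ 2 + g t ^ 2)) p_infty (w2 / sqrt (w1 ^ 2 + w2 ^ 2)).
Proof.
  intros Hw Hfg LX LY.
  assert (Hsq : 0 < sqrt (w1 ^ 2 + w2 ^ 2)).
  { apply sqrt_lt_R0. destruct Hw as [Hw | Hw];
      pose proof (pow2_ge_0 w1); pose proof (pow2_ge_0 w2); [pose proof (pow2_gt_0 w1 Hw) | pose proof (pow2_gt_0 w2 Hw)]; lra. }
  assert (Hcancel : forall t, T <= t -> forall h, (h = X t \/ h = Y t) ->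
    P t * h / sqrt ((P t * X t) ^ 2 + (P t * Y t) ^ 2) = h / sqrt (X t ^ 2 + Y t ^ 2)).
  { intros t Ht h _. destruct (Hfg t Ht) as [HP _].
    replace ((P t * X t) ^ 2 + (P t * Y t) ^ 2) with (P t ^ 2 * (X t ^ 2 + Y t ^ 2)) by ring.
    rewrite sqrt_mult_alt, sqrt_pow2 by (apply pow2_ge_0 || lra).
    destruct (Req_dec (sqrt (X t ^ 2 + Y t ^ 2)) 0) as [-> | Hne].
    - unfold Rdiv. rewrite Rmult_0_r, Rinv_0. ring.
    - field. split; lra. }
  split.
  - apply (is_lim_ext_loc (fun t => X t / sqrt (X t ^ 2 + Y t ^ 2))).
    { exists T. intros t Ht. destruct (Hfg t ltac:(lra)) as [_ [-> ->]]. symmetry. apply Hcancel; [lra | now left]. }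
    unfold is_lim in *. simpl in *. filterlim_tac; auto; lra.
  - apply (is_lim_ext_loc (fun t => Y t / sqrt (X t ^ 2 + Y t ^ 2))).
    { exists T. intros t Ht. destruct (Hfg t ltac:(lra)) as [_ [-> ->]]. symmetry. apply Hcancel; [lra | now right]. }
    unfold is_lim in *. simpl in *. filterlim_tac; auto; lra.
Qed.

(** * Two-by-two matrices *)

Definition charpoly2 (m11 m12 m21 m22 l : R) : R := (m11 - l) * (m22 - l) - m12 * m21.

Section Similarity.
Variables j11 j12 j21 j22 m11 m12 m21 m22 s11 s12 s21 s22 : R.
Hypothesis E11 : j11 * s11 + j12 * s21 = s11 * m11 + s12 * m21.
Hypothesis E12 : j11 * s12 + j12 * s22 = s11 * m12 + s12 * m22.
Hypothesis E21 : j21 * s11 + j22 * s21 = s21 * m11 + s22 * m21.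
Hypothesis E22 : j21 * s12 + j22 * s22 = s21 * m12 + s22 * m22.

Lemma charpoly2_similar l : s11 * s22 - s12 * s21 <> 0 ->
  charpoly2 j11 j12 j21 j22 l = charpoly2 m11 m12 m21 m22 l.
Proof.
  (* det ((J - l) S) = det (S (M - l)) *)
  intros Hdet. apply (Rmult_eq_reg_r (s11 * s22 - s12 * s21)); [| exact Hdet]. unfold charpoly2.
  transitivity (((j11 - l) * s11 + j12 * s21) * (j21 * s12 + (j22 - l) * s22)
              - ((j11 - l) * s12 + j12 * s22) * (j21 * s11 + (j22 - l) * s21)); [ring |].
  replace ((j11 - l) * s11 + j12 * s21) with (s11 * (m11 - l) + s12 * m21) by lra.
  replace (j21 * s12 + (j22 - l) * s22) with (s21 * m12 + s22 * (m22 - l)) by lra.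
  replace ((j11 - l) * s12 + j12 * s22) with (s11 * m12 + s12 * (m22 - l)) by lra.
  replace (j21 * s11 + (j22 - l) * s21) with (s21 * (m11 - l) + s22 * m21) by lra.
  ring.
Qed.

Lemma eigvec_similar lam z1 z2 :
  m11 * z1 + m12 * z2 = lam * z1 -> m21 * z1 + m22 * z2 = lam * z2 ->
  j11 * (s11 * z1 + s12 * z2) + j12 * (s21 * z1 + s22 * z2) = lam * (s11 * z1 + s12 * z2) /\
  j21 * (s11 * z1 + s12 * z2) + j22 * (s21 * z1 + s22 * z2) = lam * (s21 * z1 + s22 * z2).
Proof.
  intros H1 H2. split.
  - transitivity ((j11 * s11 + j12 * s21) * z1 + (j11 * s12 + j12 * s22) * z2); [ring |].
    rewrite E11, E12.
    transitivity (s11 * (m11 * z1 + m12 * z2) + s12 * (m21 * z1 + m22 * z2)); [ring |].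
    rewrite H1, H2. ring.
  - transitivity ((j21 * s11 + j22 * s21) * z1 + (j21 * s12 + j22 * s22) * z2); [ring |].
    rewrite E21, E22.
    transitivity (s21 * (m11 * z1 + m12 * z2) + s22 * (m21 * z1 + m22 * z2)); [ring |].
    rewrite H1, H2. ring.
Qed.

End Similarity.

Lemma mat2_apply_nonzero s11 s12 s21 s22 z1 z2 : s11 * s22 - s12 * s21 <> 0 -> z1 <> 0 ->
  s11 * z1 + s12 * z2 <> 0 \/ s21 * z1 + s22 * z2 <> 0.
Proof.
  intros Hdet Hz. destruct (Req_dec (s11 * z1 + s12 * z2) 0) as [H1 |]; [right | now left].
  intros H2. apply Hz, (Rmult_eq_reg_l (s11 * s22 - s12 * s21)); [| exact Hdet].
  transitivity (s22 * (s11 * z1 + s12 * z2) - s12 * (s21 * z1 + s22 * z2)); [ring |].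
  rewrite H1, H2. ring.
Qed.

Section NegativeCoupling.
Variables m11 m12 m21 m22 : R.
Hypotheses (H12 : m12 < 0) (H21 : m21 < 0).

(* (1, slow_slope) is an eigenvector: slow_slope is the negative root of
   m21 + (m22 - m11) r - m12 r^2, the limit of the Riccati equation for the slope Q/P. *)
Definition slow_slope : R := riccati_root (- m12) (m22 - m11) m21.
Definition lam_slow : R := m11 + m12 * slow_slope.
Definition lam_fast : R := m22 - m12 * slow_slope.

Lemma slow_slope_eq : m21 + (m22 - m11) * slow_slope - m12 * slow_slope ^ 2 = 0.
Proof.
  pose proof (riccati_root_eq (- m12) (m22 - m11) m21 ltac:(lra) H21) as H.
  unfold slow_slope. lra.
Qed.

Lemma slow_eigvec :
  m11 * 1 + m12 * slow_slope = lam_slow * 1 /\ m21 * 1 + m22 * slow_slope = lam_slow * slow_slope.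
Proof.
  pose proof slow_slope_eq. unfold lam_slow. split; [ring | lra].
Qed.

Lemma charpoly2_lam_slow : charpoly2 m11 m12 m21 m22 lam_slow = 0.
Proof.
  pose proof slow_slope_eq as H. unfold charpoly2, lam_slow.
  transitivity (- m12 * (m21 + (m22 - m11) * slow_slope - m12 * slow_slope ^ 2)); [ring |].
  rewrite H. ring.
Qed.

Lemma charpoly2_lam_fast : charpoly2 m11 m12 m21 m22 lam_fast = 0.
Proof.
  pose proof slow_slope_eq as H. unfold charpoly2, lam_fast.
  transitivity (- m12 * (m21 + (m22 - m11) * slow_slope - m12 * slow_slope ^ 2)); [ring |].
  rewrite H. ring.
Qed.

Lemma lam_fast_lt_lam_slow : lam_fast < lam_slow.
Proof.
  pose proof (riccati_root_gap (- m12) (m22 - m11) m21 ltac:(lra)) as Hgap.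
  pose proof (riccati_discr_pos (- m12) (m22 - m11) m21 ltac:(lra) H21) as HD.
  pose proof (sqrt_lt_R0 _ HD). unfold lam_fast, lam_slow. fold slow_slope in Hgap. lra.
Qed.

Lemma Rabs_lam_slow_lt : m11 + m22 < 0 -> 0 < m11 * m22 - m12 * m21 ->
  Rabs lam_slow < Rabs lam_fast.
Proof.
  intros Htr Hdet. pose proof lam_fast_lt_lam_slow as Hlt. pose proof slow_slope_eq as H.
  assert (Hsum : lam_slow + lam_fast = m11 + m22) by (unfold lam_slow, lam_fast; ring).
  assert (Hprod : lam_slow * lam_fast = m11 * m22 - m12 * m21).
  { unfold lam_slow, lam_fast.
    transitivity (m11 * m22 - m12 * m21 + m12 * (m21 + (m22 - m11) * slow_slope - m12 * slow_slope ^ 2));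
      [ring | rewrite H; ring]. }
  assert (Hneg : lam_slow < 0).
  { destruct (Rlt_or_le lam_slow 0) as [| Hnn]; [assumption |].
    assert (lam_fast < 0) by lra. nra. }
  rewrite !Rabs_left by lra. lra.
Qed.

End NegativeCoupling.

(** * The detailed-balanced network *)

Lemma mono_exp u v p q : mono u v p q = exp (p * ln u + q * ln v).
Proof. unfold mono, Rpower. rewrite exp_plus. reflexivity. Qed.

Lemma mono_pos u v p q : 0 < mono u v p q.
Proof. rewrite mono_exp. apply exp_pos. Qed.

Lemma ln_mono u v p q : ln (mono u v p q) = p * ln u + q * ln v.
Proof. rewrite mono_exp. apply ln_exp. Qed.

Lemma mono_plus u v a b p q : mono u v (a + p) (b + q) = mono u v a b * mono u v p q.
Proof. rewrite !mono_exp, <- exp_plus. f_equal. ring. Qed.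

Lemma mono_ratio u v X Y p q :
  mono u v p q = mono X Y p q * exp (p * (ln u - ln X) + q * (ln v - ln Y)).
Proof. rewrite !mono_exp, <- exp_plus. f_equal. ring. Qed.

Definition quadrant_continuous (f : R -> R -> R) : Prop :=
  forall (T : Type) (F : (T -> Prop) -> Prop), Filter F ->
  forall (u v : T -> R) (U V : R), 0 < U -> 0 < V ->
  filterlim u F (locally U) -> filterlim v F (locally V) ->
  filterlim (fun t => f (u t) (v t)) F (locally (f U V)).

Section DetailedBalance.
Variables a1 b1 a1' b1' a2 b2 a2' b2' eps xA yA : R.
Hypothesis heps : 0 < eps.
Hypotheses (hxA : 0 < xA) (hyA : 0 < yA).
Hypothesis hA1 : mono xA yA (a1' - a1) (b1' - b1) = eps ^ 2.
Hypothesis hA2 : mono xA yA (a2' - a2) (b2' - b2) = / eps ^ 2.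
Hypotheses (hv1 : a1' - a1 <> 0) (hv2 : a2' - a2 <> 0).
Hypothesis hcoupling : 0 <= (a1' - a1) * (a2' - a2) * ((b1' - b1) * (b2' - b2)).
Hypothesis hindep : (a1' - a1) * (b2' - b2) - (a2' - a2) * (b1' - b1) <> 0.

Local Notation al1 := (a1' - a1).
Local Notation be1 := (b1' - b1).
Local Notation al2 := (a2' - a2).
Local Notation be2 := (b2' - b2).
Local Notation kap := ((a1' - a1) * (a2' - a2)).
Local Notation det := ((a1' - a1) * (b2' - b2) - (a2' - a2) * (b1' - b1)).

(* In the coordinates P = kap logq1, Q = logq2 the field is the linear system with matrix
   (coef_ij) (log_field_linear); the factor kap = al1 al2 makes both off-diagonal
   coefficients negative. *)
Definition logq1 (u v : R) : R := al1 * (ln u - ln xA) + be1 * (ln v - ln yA).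
Definition logq2 (u v : R) : R := al2 * (ln u - ln xA) + be2 * (ln v - ln yA).
Definition fwd1 (u v : R) : R := eps * mono u v a1 b1.
Definition fwd2 (u v : R) : R := / eps * mono u v a2 b2.
Definition gram11 (u v : R) : R := al1 ^ 2 / u + be1 ^ 2 / v.
Definition gram12 (u v : R) : R := al1 * al2 / u + be1 * be2 / v.
Definition gram22 (u v : R) : R := al2 ^ 2 / u + be2 ^ 2 / v.

Definition coef11 (u v : R) : R := - gram11 u v * fwd1 u v * exprel (logq1 u v).
Definition coef12 (u v : R) : R := - (kap * gram12 u v) * fwd2 u v * exprel (logq2 u v).
Definition coef21 (u v : R) : R := - (gram12 u v / kap) * fwd1 u v * exprel (logq1 u v).
Definition coef22 (u v : R) : R := - gram22 u v * fwd2 u v * exprel (logq2 u v).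

Lemma logq1_A : logq1 xA yA = 0.
Proof. unfold logq1. ring. Qed.

Lemma logq2_A : logq2 xA yA = 0.
Proof. unfold logq2. ring. Qed.

Lemma logq1_ln_ratio u v : logq1 u v = ln (mono u v al1 be1) - ln (mono xA yA al1 be1).
Proof. unfold logq1. rewrite !ln_mono. ring. Qed.

Lemma logq2_ln_ratio u v : logq2 u v = ln (mono u v al2 be2) - ln (mono xA yA al2 be2).
Proof. unfold logq2. rewrite !ln_mono. ring. Qed.

Lemma rate1_logq u v : rate1 eps a1 b1 a1' b1' u v = - fwd1 u v * (exp (logq1 u v) - 1).
Proof.
  unfold rate1, fwd1, logq1.
  replace (mono u v a1' b1') with (mono u v (a1 + al1) (b1 + be1)) by (f_equal; ring).
  rewrite mono_plus, (mono_ratio u v xA yA al1 be1), hA1. field. lra.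
Qed.

Lemma rate2_logq u v : rate2 eps a2 b2 a2' b2' u v = - fwd2 u v * (exp (logq2 u v) - 1).
Proof.
  unfold rate2, fwd2, logq2.
  replace (mono u v a2' b2') with (mono u v (a2 + al2) (b2 + be2)) by (f_equal; ring).
  rewrite mono_plus, (mono_ratio u v xA yA al2 be2), hA2. field. lra.
Qed.

Lemma log_field_linear u v : 0 < u -> 0 < v ->
  kap * (al1 * (fieldX a1 b1 a1' b1' a2 b2 a2' b2' eps u v / u)
       + be1 * (fieldY a1 b1 a1' b1' a2 b2 a2' b2' eps u v / v))
  = coef11 u v * (kap * logq1 u v) + coef12 u v * logq2 u v /\
  al2 * (fieldX a1 b1 a1' b1' a2 b2 a2' b2' eps u v / u)
  + be2 * (fieldY a1 b1 a1' b1' a2 b2 a2' b2' eps u v / v)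
  = coef21 u v * (kap * logq1 u v) + coef22 u v * logq2 u v.
Proof.
  intros Hu Hv. unfold fieldX, fieldY, coef11, coef12, coef21, coef22, gram11, gram12, gram22.
  rewrite rate1_logq, rate2_logq, !exprel_spec.
  split; field; repeat split; auto; lra.
Qed.

Lemma kap_gram12_pos u v : 0 < u -> 0 < v -> 0 < kap * gram12 u v.
Proof.
  intros Hu Hv. unfold gram12.
  replace (kap * (al1 * al2 / u + be1 * be2 / v)) with (kap ^ 2 * / u + kap * (be1 * be2) * / v)
    by (field; lra).
  assert (0 < kap ^ 2) by (apply pow2_gt_0, Rmult_integral_contrapositive; auto).
  assert (0 < / u) by (apply Rinv_0_lt_compat; lra). assert (0 < / v) by (apply Rinv_0_lt_compat; lra).
  nra.
Qed.

Lemma gram11_pos u v : 0 < u -> 0 < v -> 0 < gram11 u v.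
Proof.
  intros Hu Hv. unfold gram11.
  assert (0 < al1 ^ 2 / u) by (apply Rdiv_lt_0_compat; [apply pow2_gt_0 |]; auto).
  assert (0 <= be1 ^ 2 / v) by (apply Rdiv_le_0_compat; [apply pow2_ge_0 | auto]). lra.
Qed.

Lemma gram22_pos u v : 0 < u -> 0 < v -> 0 < gram22 u v.
Proof.
  intros Hu Hv. unfold gram22.
  assert (0 < al2 ^ 2 / u) by (apply Rdiv_lt_0_compat; [apply pow2_gt_0 |]; auto).
  assert (0 <= be2 ^ 2 / v) by (apply Rdiv_le_0_compat; [apply pow2_ge_0 | auto]). lra.
Qed.

Lemma gram_det u v : 0 < u -> 0 < v ->
  gram11 u v * gram22 u v - gram12 u v ^ 2 = det ^ 2 / (u * v).
Proof. intros Hu Hv. unfold gram11, gram12, gram22. field. lra. Qed.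

Lemma fwd1_pos u v : 0 < fwd1 u v.
Proof. apply Rmult_lt_0_compat; [exact heps | apply mono_pos]. Qed.

Lemma fwd2_pos u v : 0 < fwd2 u v.
Proof. apply Rmult_lt_0_compat; [now apply Rinv_0_lt_compat | apply mono_pos]. Qed.

Lemma coef12_neg u v : 0 < u -> 0 < v -> coef12 u v < 0.
Proof.
  intros Hu Hv. unfold coef12.
  pose proof (kap_gram12_pos u v Hu Hv). pose proof (fwd2_pos u v). pose proof (exprel_pos (logq2 u v)).
  assert (0 < kap * gram12 u v * fwd2 u v * exprel (logq2 u v))
    by (apply Rmult_lt_0_compat; [apply Rmult_lt_0_compat |]; auto).
  lra.
Qed.

Lemma coef21_neg u v : 0 < u -> 0 < v -> coef21 u v < 0.
Proof.
  intros Hu Hv. unfold coef21.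
  assert (0 < gram12 u v / kap).
  { replace (gram12 u v / kap) with (kap * gram12 u v / kap ^ 2) by (field; auto).
    apply Rdiv_lt_0_compat; [now apply kap_gram12_pos | apply pow2_gt_0, Rmult_integral_contrapositive; auto]. }
  pose proof (fwd1_pos u v). pose proof (exprel_pos (logq1 u v)).
  assert (0 < gram12 u v / kap * fwd1 u v * exprel (logq1 u v))
    by (apply Rmult_lt_0_compat; [apply Rmult_lt_0_compat |]; auto).
  lra.
Qed.

Lemma coef_trace_A_neg : coef11 xA yA + coef22 xA yA < 0.
Proof.
  unfold coef11, coef22. rewrite logq1_A, logq2_A, exprel_0.
  pose proof (gram11_pos xA yA hxA hyA). pose proof (gram22_pos xA yA hxA hyA).
  pose proof (fwd1_pos xA yA). pose proof (fwd2_pos xA yA).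
  assert (0 < gram11 xA yA * fwd1 xA yA) by (apply Rmult_lt_0_compat; auto).
  assert (0 < gram22 xA yA * fwd2 xA yA) by (apply Rmult_lt_0_compat; auto). lra.
Qed.

Lemma coef_det_A_pos :
  0 < coef11 xA yA * coef22 xA yA - coef12 xA yA * coef21 xA yA.
Proof.
  replace (coef11 xA yA * coef22 xA yA - coef12 xA yA * coef21 xA yA)
    with (fwd1 xA yA * fwd2 xA yA * (gram11 xA yA * gram22 xA yA - gram12 xA yA ^ 2))
    by (unfold coef11, coef12, coef21, coef22; rewrite logq1_A, logq2_A, exprel_0; field; auto).
  rewrite gram_det by auto.
  apply Rmult_lt_0_compat; [apply Rmult_lt_0_compat; [apply fwd1_pos | apply fwd2_pos] |].
  apply Rdiv_lt_0_compat; [now apply pow2_gt_0 | now apply Rmult_lt_0_compat].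
Qed.

Ltac quadrant_tac :=
  intros T F FF u v U V HU HV Hu Hv;
  unfold coef11, coef12, coef21, coef22, gram11, gram12, gram22, fwd1, fwd2, logq1, logq2;
  filterlim_tac; auto; lra.

Lemma quadrant_continuous_logq1 : quadrant_continuous logq1.
Proof. quadrant_tac. Qed.
Lemma quadrant_continuous_logq2 : quadrant_continuous logq2.
Proof. quadrant_tac. Qed.
Lemma quadrant_continuous_coef11 : quadrant_continuous coef11.
Proof. quadrant_tac. Qed.
Lemma quadrant_continuous_coef12 : quadrant_continuous coef12.
Proof. quadrant_tac. Qed.
Lemma quadrant_continuous_coef21 : quadrant_continuous coef21.
Proof. quadrant_tac. Qed.
Lemma quadrant_continuous_coef22 : quadrant_continuous coef22.
Proof. quadrant_tac. Qed.

Definition jac11 : R := - (fwd1 xA yA * al1 ^ 2 + fwd2 xA yA * al2 ^ 2) / xA.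
Definition jac12 : R := - (fwd1 xA yA * al1 * be1 + fwd2 xA yA * al2 * be2) / yA.
Definition jac21 : R := - (fwd1 xA yA * al1 * be1 + fwd2 xA yA * al2 * be2) / xA.
Definition jac22 : R := - (fwd1 xA yA * be1 ^ 2 + fwd2 xA yA * be2 ^ 2) / yA.

Lemma fieldX_logq u v : fieldX a1 b1 a1' b1' a2 b2 a2' b2' eps u v =
  - fwd1 u v * (exp (logq1 u v) - 1) * al1 - fwd2 u v * (exp (logq2 u v) - 1) * al2.
Proof. unfold fieldX. rewrite rate1_logq, rate2_logq. ring. Qed.

Lemma fieldY_logq u v : fieldY a1 b1 a1' b1' a2 b2 a2' b2' eps u v =
  - fwd1 u v * (exp (logq1 u v) - 1) * be1 - fwd2 u v * (exp (logq2 u v) - 1) * be2.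
Proof. unfold fieldY. rewrite rate1_logq, rate2_logq. ring. Qed.

Ltac jacobian_tac :=
  eapply is_derive_ext; [intros t; symmetry; first [apply fieldX_logq | apply fieldY_logq] |];
  unfold jac11, jac12, jac21, jac22, fwd1, fwd2, logq1, logq2, mono, Rpower; auto_derive;
  [repeat split; lra
  | rewrite ?Rminus_diag, ?Rplus_opp_r, ?Rmult_0_r, ?Rplus_0_r, exp_0; field; lra].

Lemma jacobian_xx :
  is_derive (fun u => fieldX a1 b1 a1' b1' a2 b2 a2' b2' eps u yA) xA jac11.
Proof. jacobian_tac. Qed.

Lemma jacobian_xy :
  is_derive (fun v => fieldX a1 b1 a1' b1' a2 b2 a2' b2' eps xA v) yA jac12.
Proof. jacobian_tac. Qed.

Lemma jacobian_yx :
  is_derive (fun u => fieldY a1 b1 a1' b1' a2 b2 a2' b2' eps u yA) xA jac21.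
Proof. jacobian_tac. Qed.

Lemma jacobian_yy :
  is_derive (fun v => fieldY a1 b1 a1' b1' a2 b2 a2' b2' eps xA v) yA jac22.
Proof. jacobian_tac. Qed.

(* The chart maps (P, Q) to the displacement from A up to factors exprel(..) tending to 1,
   and conjugates the Jacobian to the matrix (coef_ij xA yA). *)
Definition chart11 : R := xA * be2 / (kap * det).
Definition chart12 : R := - xA * be1 / det.
Definition chart21 : R := - yA * al2 / (kap * det).
Definition chart22 : R := yA * al1 / det.

Lemma chart_det_neq0 : chart11 * chart22 - chart12 * chart21 <> 0.
Proof.
  unfold chart11, chart12, chart21, chart22.
  replace (xA * be2 / (kap * det) * (yA * al1 / det) - - xA * be1 / det * (- yA * al2 / (kap * det)))
    with (xA * yA / (kap * det)) by (field; auto).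
  apply Rmult_integral_contrapositive. split; [nra |].
  apply Rinv_neq_0_compat, Rmult_integral_contrapositive. split; [apply Rmult_integral_contrapositive |]; auto.
Qed.

Lemma displacement_x u v : 0 < u -> 0 < v ->
  u - xA = exprel (ln u - ln xA) * (chart11 * (kap * logq1 u v) + chart12 * logq2 u v).
Proof.
  intros Hu Hv.
  replace (chart11 * (kap * logq1 u v) + chart12 * logq2 u v) with (xA * (ln u - ln xA))
    by (unfold chart11, chart12, logq1, logq2; field; auto).
  replace (exprel (ln u - ln xA) * (xA * (ln u - ln xA)))
    with (xA * (exprel (ln u - ln xA) * (ln u - ln xA))) by ring.
  rewrite <- exprel_spec.
  replace (exp (ln u - ln xA)) with (u / xA)
    by (unfold Rminus; rewrite exp_plus, exp_Ropp, !exp_ln by auto; reflexivity).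
  field. lra.
Qed.

Lemma displacement_y u v : 0 < u -> 0 < v ->
  v - yA = exprel (ln v - ln yA) * (chart21 * (kap * logq1 u v) + chart22 * logq2 u v).
Proof.
  intros Hu Hv.
  replace (chart21 * (kap * logq1 u v) + chart22 * logq2 u v) with (yA * (ln v - ln yA))
    by (unfold chart21, chart22, logq1, logq2; field; auto).
  replace (exprel (ln v - ln yA) * (yA * (ln v - ln yA)))
    with (yA * (exprel (ln v - ln yA) * (ln v - ln yA))) by ring.
  rewrite <- exprel_spec.
  replace (exp (ln v - ln yA)) with (v / yA)
    by (unfold Rminus; rewrite exp_plus, exp_Ropp, !exp_ln by auto; reflexivity).
  field. lra.
Qed.

Lemma jacobian_chart :
  jac11 * chart11 + jac12 * chart21 = chart11 * coef11 xA yA + chart12 * coef21 xA yA /\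
  jac11 * chart12 + jac12 * chart22 = chart11 * coef12 xA yA + chart12 * coef22 xA yA /\
  jac21 * chart11 + jac22 * chart21 = chart21 * coef11 xA yA + chart22 * coef21 xA yA /\
  jac21 * chart12 + jac22 * chart22 = chart21 * coef12 xA yA + chart22 * coef22 xA yA.
Proof.
  unfold jac11, jac12, jac21, jac22, chart11, chart12, chart21, chart22,
    coef11, coef12, coef21, coef22, gram11, gram12, gram22.
  rewrite logq1_A, logq2_A, exprel_0.
  repeat split; field; repeat split; auto; lra.
Qed.

Let m11 : R := coef11 xA yA.
Let m12 : R := coef12 xA yA.
Let m21 : R := coef21 xA yA.
Let m22 : R := coef22 xA yA.
Let rs : R := slow_slope m11 m12 m21 m22.
Let w1 : R := chart11 * 1 + chart12 * rs.
Let w2 : R := chart21 * 1 + chart22 * rs.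

Lemma jacobian_charpoly2 l : charpoly2 jac11 jac12 jac21 jac22 l = charpoly2 m11 m12 m21 m22 l.
Proof.
  destruct jacobian_chart as (E11 & E12 & E21 & E22).
  exact (charpoly2_similar _ _ _ _ _ _ _ _ _ _ _ _ E11 E12 E21 E22 l chart_det_neq0).
Qed.

Lemma jacobian_slow_eigvec :
  jac11 * w1 + jac12 * w2 = lam_slow m11 m12 m21 m22 * w1 /\
  jac21 * w1 + jac22 * w2 = lam_slow m11 m12 m21 m22 * w2.
Proof.
  destruct jacobian_chart as (E11 & E12 & E21 & E22).
  destruct (slow_eigvec m11 m12 m21 m22 (coef12_neg xA yA hxA hyA) (coef21_neg xA yA hxA hyA)) as [H1 H2].
  exact (eigvec_similar _ _ _ _ _ _ _ _ _ _ _ _ E11 E12 E21 E22 _ _ _ H1 H2).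
Qed.

Lemma slow_direction_nonzero : w1 <> 0 \/ w2 <> 0.
Proof. apply mat2_apply_nonzero; [exact chart_det_neq0 | lra]. Qed.

Section Trajectory.
Variables (x y : R -> R) (xD yD : R).
Hypothesis hpos : forall t, 0 <= t -> 0 < x t /\ 0 < y t.
Hypothesis hode : forall t, 0 < t ->
  is_derive x t (fieldX a1 b1 a1' b1' a2 b2 a2' b2' eps (x t) (y t)) /\
  is_derive y t (fieldY a1 b1 a1' b1' a2 b2 a2' b2' eps (x t) (y t)).
Hypotheses (hxD : 0 < xD) (hyD : 0 < yD).
Hypothesis hstart : filterlim x (at_right 0) (locally xD) /\ filterlim y (at_right 0) (locally yD).
Hypothesis hD1 : mono xD yD al1 be1 = mono xA yA al1 be1.
Hypothesis hD2 : mono xD yD al2 be2 < mono xA yA al2 be2.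
Hypothesis hconv : is_lim x p_infty xA /\ is_lim y p_infty yA.

Let lqP (t : R) : R := kap * logq1 (x t) (y t).
Let lqQ (t : R) : R := logq2 (x t) (y t).
Let along (f : R -> R -> R) (t : R) : R := f (x t) (y t).

Lemma along_filterlim f (F : (R -> Prop) -> Prop) {FF : Filter F} X Y :
  quadrant_continuous f -> 0 < X -> 0 < Y ->
  filterlim x F (locally X) -> filterlim y F (locally Y) ->
  filterlim (along f) F (locally (f X Y)).
Proof. intros Hf HX HY Hx Hy. exact (Hf R F FF x y X Y HX HY Hx Hy). Qed.

Lemma along_continuity_pt f s : quadrant_continuous f -> 0 < s -> continuity_pt (along f) s.
Proof.
  intros Hf Hs. destruct (hode s Hs) as [Dx Dy]. destruct (hpos s ltac:(lra)).
  apply continuity_pt_filterlim, (along_filterlim f (locally s)); auto;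
    apply continuity_pt_filterlim; eapply is_derive_continuity_pt; eassumption.
Qed.

Lemma log_coords_derive t : 0 < t ->
  is_derive lqP t (along coef11 t * lqP t + along coef12 t * lqQ t) /\
  is_derive lqQ t (along coef21 t * lqP t + along coef22 t * lqQ t).
Proof.
  intros Ht. destruct (hode t Ht) as [Dx Dy]. destruct (hpos t ltac:(lra)) as [Hx Hy].
  destruct (log_field_linear (x t) (y t) Hx Hy) as [E1 E2].
  unfold lqP, lqQ, along, logq1, logq2 in *. split.
  - evar_last; [apply (is_derive_scal (fun s => al1 * (ln (x s) - ln xA) + be1 * (ln (y s) - ln yA)));
      apply is_derive_log_comb; eassumption |].
    exact E1.
  - evar_last; [apply is_derive_log_comb; eassumption |]. exact E2.
Qed.

Lemma log_coords_enter_cone : exists t1, 0 < t1 /\ 0 < lqP t1 /\ lqQ t1 < 0.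
Proof.
  destruct hstart as [Hx0 Hy0].
  assert (HP0 : logq1 xD yD = 0) by (rewrite logq1_ln_ratio, hD1; ring).
  assert (HQ0 : logq2 xD yD < 0)
    by (rewrite logq2_ln_ratio; pose proof (ln_increasing _ _ (mono_pos xD yD al2 be2) hD2); lra).
  pose proof (coef12_neg xD yD hxD hyD).
  apply (enters_cone_near_start lqP lqQ (fun t => along coef11 t * lqP t + along coef12 t * lqQ t)
           (coef12 xD yD * logq2 xD yD) (logq2 xD yD)); [| | | | exact HQ0 | nra].
  - intros t Ht. apply (log_coords_derive t Ht).
  - replace (locally 0) with (locally (kap * logq1 xD yD)) by (rewrite HP0, Rmult_0_r; reflexivity).
    apply filterlim_Rmult; [apply filterlim_const |].
    exact (along_filterlim logq1 _ _ _ quadrant_continuous_logq1 hxD hyD Hx0 Hy0).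
  - exact (along_filterlim logq2 _ _ _ quadrant_continuous_logq2 hxD hyD Hx0 Hy0).
  - replace (coef12 xD yD * logq2 xD yD) with (coef11 xD yD * (kap * logq1 xD yD) + coef12 xD yD * logq2 xD yD)
      by (rewrite HP0; ring).
    apply filterlim_Rplus; apply filterlim_Rmult;
      [| apply filterlim_Rmult; [apply filterlim_const |] | |];
      apply (along_filterlim _ _ xD yD); auto using quadrant_continuous_coef11,
        quadrant_continuous_coef12, quadrant_continuous_logq1, quadrant_continuous_logq2.
Qed.

Lemma log_coords_stay_in_cone : exists t1, 0 < t1 /\ forall t, t1 <= t -> 0 < lqP t /\ lqQ t < 0.
Proof.
  destruct log_coords_enter_cone as [t1 [Ht1 [HP1 HQ1]]]. exists t1. split; [exact Ht1 |].
  apply (cone_invariant lqP lqQ (along coef11) (along coef12) (along coef21) (along coef22));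
    [intros s Hs; apply log_coords_derive; lra .. | | | | exact HP1 | exact HQ1].
  - intros s Hs. apply along_continuity_pt; [exact quadrant_continuous_coef11 | lra].
  - intros s Hs. destruct (hpos s ltac:(lra)). apply Rlt_le, coef12_neg; assumption.
  - intros s Hs. destruct (hpos s ltac:(lra)). apply coef21_neg; assumption.
Qed.

Lemma log_coords_slope_limit : is_lim (fun t => lqQ t / lqP t) p_infty rs.
Proof.
  destruct log_coords_stay_in_cone as [t1 [Ht1 Hcone]]. destruct hconv as [Hx Hy].
  assert (Hlim : forall f, quadrant_continuous f -> is_lim (along f) p_infty (f xA yA))
    by (intros f Hf; exact (along_filterlim f _ xA yA Hf hxA hyA Hx Hy)).
  unfold rs, slow_slope, m11, m12, m21, m22.
  apply (riccati_limit _ (along coef21) (fun t => along coef22 t - along coef11 t)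
           (fun t => - along coef12 t) _ _ _ t1).
  - pose proof (coef12_neg xA yA hxA hyA). lra.
  - exact (coef21_neg xA yA hxA hyA).
  - intros t Ht. destruct (Hcone t Ht). apply Rdiv_neg_pos; assumption.
  - intros t Ht. destruct (Hcone t Ht). destruct (log_coords_derive t ltac:(lra)) as [DP DQ].
    evar_last; [apply is_derive_div; [exact DQ | exact DP | lra] |]. simpl. field. lra.
  - apply Hlim, quadrant_continuous_coef21.
  - apply filterlim_Rminus; apply Hlim; auto using quadrant_continuous_coef22, quadrant_continuous_coef11.
  - apply filterlim_Ropp, Hlim, quadrant_continuous_coef12.
Qed.

Lemma trajectory_direction_limit :
  is_lim (fun t => (x t - xA) / sqrt ((x t - xA) ^ 2 + (y t - yA) ^ 2)) p_infty
    (w1 / sqrt (w1 ^ 2 + w2 ^ 2)) /\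
  is_lim (fun t => (y t - yA) / sqrt ((x t - xA) ^ 2 + (y t - yA) ^ 2)) p_infty
    (w2 / sqrt (w1 ^ 2 + w2 ^ 2)).
Proof.
  destruct log_coords_stay_in_cone as [t1 [Ht1 Hcone]]. destruct hconv as [Hx Hy].
  pose proof log_coords_slope_limit as Hrho.
  set (rho := fun t => lqQ t / lqP t) in Hrho.
  apply (normalized_limit _ _ lqP
    (fun t => exprel (ln (x t) - ln xA) * (chart11 + chart12 * rho t))
    (fun t => exprel (ln (y t) - ln yA) * (chart21 + chart22 * rho t)) t1 w1 w2 slow_direction_nonzero).
  - intros t Ht. destruct (Hcone t Ht) as [HP HQ]. destruct (hpos t ltac:(lra)) as [Hxt Hyt].
    rewrite (displacement_x (x t) (y t)), (displacement_y (x t) (y t)) by assumption.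
    unfold rho, lqP, lqQ in *. set (P := kap * logq1 (x t) (y t)) in *.
    repeat split; [exact HP | field; lra | field; lra].
  - replace w1 with (exprel (ln xA - ln xA) * (chart11 + chart12 * rs))
      by (unfold w1; rewrite Rminus_diag, exprel_0; ring).
    clearbody rho. unfold is_lim in *. simpl in *. filterlim_tac; auto.
  - replace w2 with (exprel (ln yA - ln yA) * (chart21 + chart22 * rs))
      by (unfold w2; rewrite Rminus_diag, exprel_0; ring).
    clearbody rho. unfold is_lim in *. simpl in *. filterlim_tac; auto.
Qed.

Theorem slow_eigendirection_approach :
  let J11 := Derive (fun u => fieldX a1 b1 a1' b1' a2 b2 a2' b2' eps u yA) xA in
  let J12 := Derive (fun v => fieldX a1 b1 a1' b1' a2 b2 a2' b2' eps xA v) yA in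
  let J21 := Derive (fun u => fieldY a1 b1 a1' b1' a2 b2 a2' b2' eps u yA) xA in
  let J22 := Derive (fun v => fieldY a1 b1 a1' b1' a2 b2 a2' b2' eps xA v) yA in
  exists lslow lfast w1 w2 : R,
    lslow <> lfast /\
    charpoly2 J11 J12 J21 J22 lslow = 0 /\
    charpoly2 J11 J12 J21 J22 lfast = 0 /\
    Rabs lslow < Rabs lfast /\
    (w1 <> 0 \/ w2 <> 0) /\
    J11 * w1 + J12 * w2 = lslow * w1 /\
    J21 * w1 + J22 * w2 = lslow * w2 /\
    is_lim (fun t => (x t - xA) / sqrt ((x t - xA) ^ 2 + (y t - yA) ^ 2)) p_infty
      (w1 / sqrt (w1 ^ 2 + w2 ^ 2)) /\
    is_lim (fun t => (y t - yA) / sqrt ((x t - xA) ^ 2 + (y t - yA) ^ 2)) p_infty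
      (w2 / sqrt (w1 ^ 2 + w2 ^ 2)).
Proof.
  intros J11 J12 J21 J22.
  replace J11 with jac11 by (symmetry; apply is_derive_unique, jacobian_xx).
  replace J12 with jac12 by (symmetry; apply is_derive_unique, jacobian_xy).
  replace J21 with jac21 by (symmetry; apply is_derive_unique, jacobian_yx).
  replace J22 with jac22 by (symmetry; apply is_derive_unique, jacobian_yy).
  pose proof (coef12_neg xA yA hxA hyA) as H12. pose proof (coef21_neg xA yA hxA hyA) as H21.
  exists (lam_slow m11 m12 m21 m22), (lam_fast m11 m12 m21 m22), w1, w2.
  rewrite !jacobian_charpoly2.
  repeat split.
  - pose proof (lam_fast_lt_lam_slow m11 m12 m21 m22 H12 H21). lra.
  - now apply charpoly2_lam_slow.
  - now apply charpoly2_lam_fast.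
  - now apply Rabs_lam_slow_lt; [| | apply coef_trace_A_neg | apply coef_det_A_pos].
  - exact slow_direction_nonzero.
  - apply jacobian_slow_eigvec.
  - apply jacobian_slow_eigvec.
  - apply trajectory_direction_limit.
  - apply trajectory_direction_limit.
Qed.

End Trajectory.

End DetailedBalance.

Lemma reaction_slopes_coupled al1 be1 al2 be2 : al1 <> 0 -> al2 <> 0 ->
  0 <= be1 / al1 * (be2 / al2) -> be1 / al1 <> be2 / al2 ->
  0 <= al1 * al2 * (be1 * be2) /\ al1 * be2 - al2 * be1 <> 0.
Proof.
  intros H1 H2 Hpos Hne.
  replace (al1 * al2 * (be1 * be2)) with ((al1 * al2) ^ 2 * (be1 / al1 * (be2 / al2))) by (field; auto).
  replace (al1 * be2 - al2 * be1) with (al1 * al2 * (be2 / al2 - be1 / al1)) by (field; auto).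
  split; [apply Rmult_le_pos; [apply pow2_ge_0 | exact Hpos] |].
  apply Rmult_integral_contrapositive; split; [apply Rmult_integral_contrapositive; auto | lra].
Qed.

Theorem proposition4p10 (a1 b1 a1' b1' a2 b2 a2' b2' eps : R)
  (ha1 : 0 <= a1) (hb1 : 0 <= b1) (ha1' : 0 <= a1') (hb1' : 0 <= b1')
  (ha2 : 0 <= a2) (hb2 : 0 <= b2) (ha2' : 0 <= a2') (hb2' : 0 <= b2')
  (hv1 : a1' - a1 <> 0) (hv2 : a2' - a2 <> 0)
  (hs1 : -1 < (b1' - b1) / (a1' - a1) < 0)
  (hs2 : (b2' - b2) / (a2' - a2) < -1)
  (heps : 0 < eps < 1)
  (xA yA xD yD : R)
  (hA : 0 < xA /\ 0 < yA /\
        mono xA yA (a1' - a1) (b1' - b1) = eps ^ 2 /\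
        mono xA yA (a2' - a2) (b2' - b2) = / eps ^ 2)
  (hD : 0 < xD /\ 0 < yD /\
        mono xD yD (a1' - a1) (b1' - b1) = eps ^ 2 /\
        mono xD yD (a2' - a2) (b2' - b2) = eps ^ 2)
  (x y : R -> R)
  (hpos : forall t, 0 <= t -> 0 < x t /\ 0 < y t)
  (hinit : x 0 = xD /\ y 0 = yD)
  (hcont0 : filterlim x (at_right 0) (locally xD) /\
            filterlim y (at_right 0) (locally yD))
  (hode : forall t, 0 < t ->
     is_derive x t (fieldX a1 b1 a1' b1' a2 b2 a2' b2' eps (x t) (y t)) /\
     is_derive y t (fieldY a1 b1 a1' b1' a2 b2 a2' b2' eps (x t) (y t)))
  (hconv : is_lim x p_infty xA /\ is_lim y p_infty yA) :
  let J11 := Derive (fun u => fieldX a1 b1 a1' b1' a2 b2 a2' b2' eps u yA) xA in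
  let J12 := Derive (fun v => fieldX a1 b1 a1' b1' a2 b2 a2' b2' eps xA v) yA in
  let J21 := Derive (fun u => fieldY a1 b1 a1' b1' a2 b2 a2' b2' eps u yA) xA in
  let J22 := Derive (fun v => fieldY a1 b1 a1' b1' a2 b2 a2' b2' eps xA v) yA in
  exists lslow lfast w1 w2 : R,
    lslow <> lfast /\
    (J11 - lslow) * (J22 - lslow) - J12 * J21 = 0 /\
    (J11 - lfast) * (J22 - lfast) - J12 * J21 = 0 /\
    Rabs lslow < Rabs lfast /\
    (w1 <> 0 \/ w2 <> 0) /\
    J11 * w1 + J12 * w2 = lslow * w1 /\
    J21 * w1 + J22 * w2 = lslow * w2 /\
    exists s : R, (s = 1 \/ s = -1) /\
      is_lim (fun t => (x t - xA) / sqrt ((x t - xA) ^ 2 + (y t - yA) ^ 2))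
             p_infty (s * w1 / sqrt (w1 ^ 2 + w2 ^ 2)) /\
      is_lim (fun t => (y t - yA) / sqrt ((x t - xA) ^ 2 + (y t - yA) ^ 2))
             p_infty (s * w2 / sqrt (w1 ^ 2 + w2 ^ 2)).
Proof.
  intros J11 J12 J21 J22.
  destruct hA as (HxA & HyA & HA1 & HA2), hD as (HxD & HyD & HD1 & HD2).
  destruct (reaction_slopes_coupled (a1' - a1) (b1' - b1) (a2' - a2) (b2' - b2) hv1 hv2)
    as [Hcoupling Hindep]; [nra | lra |].
  assert (Heps2 : eps ^ 2 < / eps ^ 2).
  { assert (Hsq : 0 < eps ^ 2 < 1) by (split; nra).
    assert (1 < / eps ^ 2) by (rewrite <- Rinv_1; apply Rinv_lt_contravar; lra). lra. }
  destruct (slow_eigendirection_approach a1 b1 a1' b1' a2 b2 a2' b2' eps xA yA (proj1 heps)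
              HxA HyA HA1 HA2 hv1 hv2 Hcoupling Hindep x y xD yD hpos hode HxD HyD hcont0)
    as (lslow & lfast & w1 & w2 & Hne & Hslow & Hfast & Habs & Hw & Ew1 & Ew2 & Lx & Ly);
    [congruence | rewrite HD2, HA2; exact Heps2 | exact hconv |].
  exists lslow, lfast, w1, w2. repeat split; try assumption.
  exists 1. rewrite !Rmult_1_l. split; [now left | split; assumption].
Qed.
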